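(* Let $\mathbb{K}$ be an algebraically closed field of characteristic zero, let $D$ be a simple derivation of $\mathbb{K}[x,y]$ and let $\rho\in\mathrm{Aut}(D)$. If $\rho$ stabilizes the ideal $(x)\subset\mathbb{K}[x,y]$ generated by $x$, then $\rho=\mathrm{id}$.
   Context: A derivation of $\mathbb{K}[x,y]$ is a $\mathbb{K}$-linear map $D$ with $D(fg)=gD(f)+fD(g)$. $D$ is simple if there is no ideal $I$ with $(0)\neq I\neq \mathbb{K}[x,y]$ and $D(I)\subseteq I$. $\mathrm{Aut}(D)$ denotes the group of $\mathbb{K}$-algebra automorphisms $\rho$ of $\mathbb{K}[x,y]$ with $\rho D=D\rho$. *)

From HB Require Import structures.
From mathcomp Require Import all_boot all_algebra.
From mathcomp Require Import mpoly.
Set Implicit Arguments. Unset Strict Implicit. Unset Printing Implicit Defensive.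
Import GRing.Theory.
Local Open Scope ring_scope.

(* K[x,y] is {mpoly K[2]}, with x = 'X_0 and y = 'X_1. *)

Definition is_derivation (K : fieldType) (D : {mpoly K[2]} -> {mpoly K[2]}) : Prop :=
  (forall (a : K) (p q : {mpoly K[2]}), D (a *: p + q) = a *: D p + D q) /\
  (forall f g : {mpoly K[2]}, D (f * g) = g * D f + f * D g).

Definition is_ideal (K : fieldType) (I : {mpoly K[2]} -> Prop) : Prop :=
  I 0 /\
  (forall a b, I a -> I b -> I (a + b)) /\
  (forall r a, I a -> I (r * a)).

Definition simple_derivation (K : fieldType) (D : {mpoly K[2]} -> {mpoly K[2]}) : Prop :=
  is_derivation D /\
  forall I : {mpoly K[2]} -> Prop, is_ideal I -> (forall f, I f -> I (D f)) ->
    (forall f, I f -> f = 0) \/ (forall f, I f).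

Definition is_Kalg_automorphism (K : fieldType) (rho : {mpoly K[2]} -> {mpoly K[2]}) : Prop :=
  bijective rho /\
  (forall (a : K) (p q : {mpoly K[2]}), rho (a *: p + q) = a *: rho p + rho q) /\
  (forall f g, rho (f * g) = rho f * rho g) /\
  rho 1 = 1.

Definition in_AutD (K : fieldType) (D rho : {mpoly K[2]} -> {mpoly K[2]}) : Prop :=
  is_Kalg_automorphism rho /\ forall f, rho (D f) = D (rho f).

Definition ideal_x (K : fieldType) (f : {mpoly K[2]}) : Prop :=
  exists g : {mpoly K[2]}, f = g * 'X_(ord0 : 'I_2).

(* If rho has a fixed point P, viewed as a polynomial map of K^2, the ideal
   generated by all rho f - f is D-stable and lies in the maximal ideal of P, so
   it is zero by simplicity and rho = id.  Otherwise, since rho stabilizes (x),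
   rho x = k x; on the line x = 0 the automorphism has no fixed point, so it acts
   there as y |-> y + b, and comparing leading coefficients of D x on that line
   gives k = 1.  Then rho is a fixed-point-free translation on every line
   x = s, whence rho y = y + b with b a nonzero constant.  D x and D y are
   invariant under this translation, hence lie in K[x] (characteristic 0); but
   then (x - s), for a root s of D x, or (y - F(x)) with F' = D y / D x when D x
   is a constant, is a proper D-stable principal ideal. *)

From HB Require Import structures.
From mathcomp Require Import all_boot all_algebra.
From mathcomp Require Import mpoly.
From mathcomp Require Import zify.
From Stdlib Require Import Classical.
Set Implicit Arguments. Unset Strict Implicit. Unset Printing Implicit Defensive.
Import GRing.Theory.
Local Open Scope ring_scope.

Section CharZeroDomain.
Variable R : idomainType.
Hypothesis R_char0 : [pchar R] =i pred0.

Lemma natr_inj : injective (fun n : nat => n%:R : R).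
Proof.
have natr_eq0 := (pcharf0P R).1 R_char0.
suff le_inj m n : (m <= n)%N -> m%:R = n%:R :> R -> m = n.
  by move=> m n; case: (leqP m n) => [/le_inj // | /ltnW /le_inj le_inj' /esym/le_inj'].
move=> le_mn /eqP; rewrite eq_sym -subr_eq0 -natrB // natr_eq0 subn_eq0 => le_nm.
by apply/eqP; rewrite eqn_leq le_mn.
Qed.

Lemma poly_eq0_of_roots_natr (p : {poly R}) (a : R) :
  a != 0 -> (forall n : nat, root p (n%:R * a)) -> p = 0.
Proof.
move=> a_neq0 p_root.
apply: (@roots_geq_poly_eq0 _ p (mkseq (fun n => n%:R * a) (size p))).
- by apply/allP => _ /mapP [n _ ->].
- by apply: mkseq_uniq => m n /(mulIf a_neq0) /natr_inj.
- by rewrite size_mkseq.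
Qed.

Lemma poly_eq0_of_roots (p : {poly R}) : (forall t, root p t) -> p = 0.
Proof. by move=> p_root; apply: (poly_eq0_of_roots_natr (oner_neq0 R)). Qed.

Lemma comp_polyXaddC_invariant (p : {poly R}) (a : R) :
  a != 0 -> p \Po ('X + a%:P) = p -> p = (p`_0)%:P.
Proof.
move=> a_neq0 p_inv; apply/eqP; rewrite -subr_eq0; apply/eqP.
set q := p - _; apply: (poly_eq0_of_roots_natr a_neq0); elim=> [|n IHn].
  by rewrite mul0r /root horner_coef0 coefB coefC subrr.
have q_inv : q \Po ('X + a%:P) = q by rewrite comp_polyB comp_polyC p_inv.
have -> : n.+1%:R * a = ('X + a%:P).[n%:R * a].
  by rewrite hornerD hornerX hornerC mulrSr mulrDl mul1r.
by rewrite /root -horner_comp q_inv.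
Qed.

End CharZeroDomain.

Lemma exists_antiderivative (F : fieldType) : [pchar F] =i pred0 ->
  forall u : {poly F}, exists p, p^`() = u.
Proof.
move=> F_char0 u.
exists (\poly_(i < (size u).+1) (if i is j.+1 then u`_j / j.+1%:R else 0)).
apply/polyP => i; rewrite coef_deriv coef_poly ltnS.
case: ltnP => [_ | le_u_i]; last by rewrite mul0rn nth_default.
rewrite -[_ *+ i.+1]mulr_natr divfK //.
by apply/eqP => /(@natr_inj _ F_char0 i.+1 0).
Qed.

Lemma polyX_factor (R : idomainType) (a b : {poly R}) :
  a * b = 'X -> size a = 1%N \/ size b = 1%N.
Proof.
move=> ab_X.
have a_neq0 : a != 0 by apply: contra_eq_neq ab_X => ->; rewrite mul0r eq_sym polyX_eq0.
have b_neq0 : b != 0 by apply: contra_eq_neq ab_X => ->; rewrite mulr0 eq_sym polyX_eq0.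
have : size (a * b) = 2%N by rewrite ab_X size_polyX.
rewrite size_mul //; move: a_neq0 b_neq0; rewrite -!size_poly_gt0; lia.
Qed.

Lemma polyXaddC_of_fixpoint_free (K : closedFieldType) (p : {poly K}) :
  (forall t, p.[t] != t) -> exists2 b, b != 0 & p = 'X + b%:P.
Proof.
move=> p_free; have /size_poly1P [b b_neq0 pXb] : size (p - 'X) == 1%N.
  apply: contraT => /closed_rootP [t]; rewrite /root hornerD hornerN hornerX subr_eq0.
  by rewrite (negbTE (p_free t)).
by exists b => //; rewrite -pXb addrC subrK.
Qed.

Section BivariatePolynomials.
Variable K : fieldType.
Local Notation S := {poly {poly K}}.

(* K[x,y] is modelled as {poly {poly K}}: x is the constant 'X%:P and y is 'X. *)
Definition polyx : S := ('X : {poly K})%:P.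
Definition polyK : {rmorphism K -> S} := @polyC {poly K} \o @polyC K.

Definition evalx (s : K) : {rmorphism S -> {poly K}} := map_poly (horner_eval s).
Definition eval2 (s t : K) : {rmorphism S -> K} := horner_eval t \o evalx s.

Lemma evalxC s (p : {poly K}) : evalx s p%:P = (p.[s])%:P.
Proof. by rewrite /= map_polyC. Qed.

Lemma evalxX s : evalx s 'X = 'X.
Proof. exact: map_polyX. Qed.

Lemma evalxK s k : evalx s (polyK k) = k%:P.
Proof. by rewrite evalxC hornerC. Qed.

Lemma evalxx s : evalx s polyx = s%:P.
Proof. by rewrite evalxC hornerX. Qed.

Lemma eval2E s t f : eval2 s t f = (evalx s f).[t].
Proof. by []. Qed.

Lemma eval2C s t (p : {poly K}) : eval2 s t p%:P = p.[s].
Proof. by rewrite eval2E evalxC hornerC. Qed.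

Lemma eval2K s t k : eval2 s t (polyK k) = k.
Proof. by rewrite eval2C hornerC. Qed.

Lemma eval2x s t : eval2 s t polyx = s.
Proof. by rewrite eval2E evalxx hornerC. Qed.

Lemma eval2y s t : eval2 s t 'X = t.
Proof. by rewrite eval2E evalxX hornerX. Qed.

Lemma eq_morph_generators (T : nzRingType) (f g : S -> T) :
    {morph f : a b / a + b} -> {morph f : a b / a * b} ->
    {morph g : a b / a + b} -> {morph g : a b / a * b} ->
    (forall k, f (polyK k) = g (polyK k)) -> f polyx = g polyx -> f 'X = g 'X ->
  f =1 g.
Proof.
move=> fD fM gD gM fgK fgx fgy.
have fgC (p : {poly K}) : f p%:P = g p%:P.
  elim/poly_ind: p => [|p c IHp]; first by have := fgK 0; rewrite rmorph0.
  by rewrite polyCD polyCM fD gD fM gM IHp fgx fgK.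
elim/poly_ind => [|p c IHp]; first exact: fgC.
by rewrite fD gD fM gM IHp fgy fgC.
Qed.

Lemma polyx_neq_polyK k : polyx != polyK k.
Proof.
apply/eqP => /polyC_inj X_eq_k; have := size_polyX K.
by rewrite X_eq_k size_polyC; case: (k != 0).
Qed.

Lemma polyx_neq0 : polyx != 0.
Proof. by rewrite polyC_eq0 polyX_eq0. Qed.

Lemma dvd_polyx_of_evalx0 f : evalx 0 f = 0 -> exists g, f = g * polyx.
Proof.
move=> f0; exists (map_poly (fun p : {poly K} => p %/ 'X) f).
apply/polyP => i; rewrite coefMC coef_map_id0 ?div0p // divpK //.
have /eqP : (evalx 0 f)`_i = 0 by rewrite f0 coef0.
by rewrite coef_map /= -['X]subr0 -polyC0 dvdp_XsubCl.
Qed.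

End BivariatePolynomials.

Arguments polyK {K}.

Definition ideal_pred (R : pzRingType) (I : R -> Prop) : Prop :=
  [/\ I 0, forall a b, I a -> I b -> I (a + b) & forall c a, I a -> I (c * a)].

Section IdealSpan.
Variable R : pzRingType.

Definition ideal_span (G : R -> Prop) (h : R) : Prop :=
  forall I, ideal_pred I -> (forall g, G g -> I g) -> I h.

Lemma ideal_span_ideal G : ideal_pred (ideal_span G).
Proof.
split=> [I [] // | a b Ga Gb I I_ideal GI | c a Ga I I_ideal GI].
  by case: I_ideal (Ga I I_ideal GI) (Gb I I_ideal GI) => _ + _; apply.
by case: I_ideal (Ga I I_ideal GI) => _ _; apply.
Qed.

Lemma ideal_span_sub G g : G g -> ideal_span G g.
Proof. by move=> Gg I _; apply. Qed.

End IdealSpan.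

Section SimpleDerivation.
Variable K : closedFieldType.
Local Notation S := {poly {poly K}}.
Local Notation polyx := (@polyx K).

Variable D : S -> S.
Hypothesis DD : {morph D : a b / a + b}.
Hypothesis DK : forall k a, D (polyK k * a) = polyK k * D a.
Hypothesis DL : forall f g, D (f * g) = g * D f + f * D g.
Hypothesis D_simple : forall I : S -> Prop, ideal_pred I -> (forall f, I f -> I (D f)) ->
  (forall f, I f -> f = 0) \/ (forall f, I f).

Lemma D0 : D 0 = 0.
Proof. by apply: (@addrI _ (D 0)); rewrite -DD !addr0. Qed.

Lemma DN a : D (- a) = - D a.
Proof. by apply/eqP; rewrite -addr_eq0 -DD addNr D0. Qed.

Lemma DB a b : D (a - b) = D a - D b.
Proof. by rewrite DD DN. Qed.

Lemma DK0 k : D (polyK k) = 0.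
Proof.
have D1 : D 1 = 0.
  by apply: (@addrI _ (D 1)); have := DL 1 1; rewrite !mul1r addr0 => <-.
by rewrite -[polyK k]mulr1 DK D1 mulr0.
Qed.

Lemma D_polyC (p : {poly K}) : D p%:P = (p^`())%:P * D polyx.
Proof.
elim/poly_ind: p => [|p c IHp]; first by rewrite polyC0 D0 deriv0 polyC0 mul0r.
rewrite polyCD polyCM DD DL IHp DK0 addr0 derivMXaddC polyCD polyCM mulrDl addrC.
by congr (_ + _); rewrite mulrCA mulrA.
Qed.

Lemma darboux_eval_neq0 (z w : S) s t : z != 0 -> D z = w * z -> eval2 s t z != 0.
Proof.
move=> z_neq0 Dz; apply/eqP => z_st.
pose I f := exists g, f = g * z.
have I_ideal : ideal_pred I.
  split; first by exists 0; rewrite mul0r.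
    by move=> _ _ [g ->] [h ->]; exists (g + h); rewrite mulrDl.
  by move=> c _ [g ->]; exists (c * g); rewrite mulrA.
have I_stable f : I f -> I (D f).
  by case=> g ->; exists (D g + g * w); rewrite DL Dz mulrDl mulrA mulrC.
case: (D_simple I_ideal I_stable) => [I0 | I1].
  by move: z_neq0; rewrite (I0 z) ?eqxx //; exists 1; rewrite mul1r.
have [g /(congr1 (eval2 s t))] := I1 1.
by rewrite rmorphM z_st mulr0 rmorph1 => /eqP; rewrite oner_eq0.
Qed.

Lemma evalx0_Dx_neq0 : evalx 0 (D polyx) != 0.
Proof.
apply/eqP => /dvd_polyx_of_evalx0 [w Dx].
by move: (darboux_eval_neq0 0 0 (@polyx_neq0 K) Dx); rewrite eval2x eqxx.
Qed.

Hypothesis K_char0 : [pchar K] =i pred0.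

Lemma not_D_into_Kx (p q : {poly K}) : D polyx = p%:P -> D 'X = q%:P -> False.
Proof.
move=> Dx Dy.
have [/closed_rootP [s] | /negPn/size_poly1P [c c_neq0 p_c]] := boolP (size p != 1%N).
  case/factor_theorem => p' p_def.
  have z_neq0 : polyx - polyK s != 0 by rewrite subr_eq0 polyx_neq_polyK.
  have Dz : D (polyx - polyK s) = p'%:P * (polyx - polyK s).
    by rewrite DB DK0 subr0 Dx p_def polyCM polyCB.
  by move: (darboux_eval_neq0 s 0 z_neq0 Dz); rewrite rmorphB eval2x eval2K subrr eqxx.
have [F F_def] := exists_antiderivative K_char0 (q * c^-1%:P).
have z_neq0 : 'X - F%:P != 0.
  apply/eqP => /(congr1 (fun f : S => f`_1)).
  by rewrite coefB coefX coefC subr0 coef0; apply/eqP/oner_neq0.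
have Dz : D ('X - F%:P) = 0 * ('X - F%:P).
  rewrite mul0r DB D_polyC F_def Dx p_c -polyCM -mulrA -polyCM mulVf //.
  by rewrite polyC1 mulr1 Dy subrr.
by move: (darboux_eval_neq0 0 F.[0] z_neq0 Dz); rewrite rmorphB eval2y eval2C subrr eqxx.
Qed.

Lemma ideal_span_Dstable (G : S -> Prop) :
  (forall g, G g -> G (D g)) -> forall h, ideal_span G h -> ideal_span G (D h).
Proof.
move=> G_stable h Gh I I_ideal GI.
have [I0 ID IM] := I_ideal.
suff [] : I h /\ I (D h) by [].
apply: (Gh (fun h => I h /\ I (D h))) => [|g Gg].
  split=> [|a b [Ia IDa] [Ib IDb] | c a [Ia IDa]]; rewrite ?D0 ?DD ?DL; split; auto.
  by apply: ID; [rewrite mulrC|]; apply: IM.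
by split; apply: GI => //; apply: G_stable.
Qed.

Variable r : S -> S.
Hypothesis r_bij : bijective r.
Hypothesis rD : {morph r : a b / a + b}.
Hypothesis rM : {morph r : a b / a * b}.
Hypothesis rK : forall k, r (polyK k) = polyK k.
Hypothesis rDC : forall f, r (D f) = D (r f).

Definition fixes_point (s t : K) : Prop :=
  eval2 s t (r polyx) = s /\ eval2 s t (r 'X) = t.

Lemma eval2_aut_fixed s t : fixes_point s t -> forall f, eval2 s t (r f) = eval2 s t f.
Proof.
case=> rx_st ry_st; apply: eq_morph_generators => [a b|a b|a b|a b|k||].
all: by rewrite ?rD ?rM ?rK ?rmorphD ?rmorphM ?rx_st ?ry_st ?eval2x ?eval2y.
Qed.

Lemma aut_eq_id_of_fixed_point s t : fixes_point s t -> r =1 id.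
Proof.
move=> fix_st.
pose G g := exists f, g = r f - f.
have G_stable g : G g -> G (D g) by case=> f ->; exists (D f); rewrite DB rDC.
have [span0 | span1] := D_simple (ideal_span_ideal G) (ideal_span_Dstable G_stable).
  move=> f; apply/eqP; rewrite -subr_eq0; apply/eqP; apply: span0; apply: ideal_span_sub.
  by exists f.
have vanish_ideal : ideal_pred (fun h => eval2 s t h = 0).
  by split=> [|a b a0 b0|c a a0]; rewrite ?rmorph0 ?rmorphD ?rmorphM ?a0 ?b0 ?addr0 ?mulr0.
have /eqP : eval2 s t 1 = 0.
  by apply: (span1 1 _ vanish_ideal) => _ [f ->]; rewrite rmorphB eval2_aut_fixed // subrr.
by rewrite rmorph1 oner_eq0.
Qed.

Lemma aut_x_scalar : (exists g, r polyx = g * polyx) ->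
  exists k, r polyx = polyK k * polyx.
Proof.
case=> g rx; case: r_bij => r' rK' r'K.
have r'M : {morph r' : a b / a * b}.
  by move=> a b; rewrite -{1}(r'K a) -{1}(r'K b) -rM rK'.
have x_eq : polyx = r' g * r' polyx by rewrite -r'M -rx rK'.
have /eqP : size (r' g * r' polyx) = 1%N by rewrite -x_eq size_polyC polyX_eq0.
rewrite size_mul_eq1 => /andP[/size_poly1P[a _ ra] /size_poly1P[b _ rb]].
have : a * b = 'X by apply: polyC_inj; rewrite polyCM -ra -rb -x_eq.
move/polyX_factor => [] /eqP/size_poly1P[k _ k_def].
  by exists k => //; rewrite rx -(r'K g) ra k_def rK.
by move: (polyx_neq_polyK k); rewrite -rK /= -k_def -rb r'K eqxx.
Qed.

Section FixedPointFree.
Hypothesis r_fixed_point_free : forall s t, ~ fixes_point s t.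
Hypothesis r_stable_x : exists g, r polyx = g * polyx.

Lemma aut_fixes_x : r polyx = polyx.
Proof.
have [k rx] := aut_x_scalar r_stable_x.
have [b _ ry0] : exists2 b, b != 0 & evalx 0 (r 'X) = 'X + b%:P.
  apply: polyXaddC_of_fixpoint_free => t; apply/negP => /eqP ry_t.
  by apply: (@r_fixed_point_free 0 t); rewrite /fixes_point rx rmorphM eval2x mulr0 eval2E ry_t.
have evalx0_r : forall f, evalx 0 (r f) = evalx 0 f \Po ('X + b%:P).
  apply: eq_morph_generators => [u v|u v|u v|u v|c||]; rewrite ?rD ?rM ?rmorphD ?rmorphM //.
  - by rewrite rK evalxK comp_polyC.
  - by rewrite rx rmorphM evalxx polyC0 mulr0 comp_polyC.
  - by rewrite ry0 evalxX comp_polyX.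
have /eqP := congr1 lead_coef (evalx0_r (D polyx)).
rewrite rDC rx DK rmorphM evalxK mul_polyC lead_coefZ lead_coef_comp ?size_XaddC //.
rewrite lead_coefXaddC expr1n mulr1 -{2}[lead_coef _]mul1r (inj_eq (mulIf _)).
  by move=> /eqP ->; rewrite rmorph1 mul1r.
by rewrite lead_coef_eq0 evalx0_Dx_neq0.
Qed.

Lemma aut_translates_y : exists2 b, b != 0 & r 'X = 'X + polyK b.
Proof.
set Q := r 'X - 'X.
have Q_eval s : exists2 b, b != 0 & evalx s Q = b%:P.
  have [|b b_neq0 ry] := @polyXaddC_of_fixpoint_free _ (evalx s (r 'X)).
    move=> t; apply/negP => /eqP ry_t; apply: (@r_fixed_point_free s t).
    by rewrite /fixes_point aut_fixes_x eval2x eval2E ry_t.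
  by exists b; rewrite // /Q rmorphB ry evalxX addrC addKr.
have Q_coef s i : (evalx s Q)`_i = (Q`_i).[s] by rewrite coef_map.
have Q_const : Q = (Q`_0)%:P.
  apply/polyP => [[|i]]; rewrite coefC //=; apply: poly_eq0_of_roots => // s.
  by have [b _ Qb] := Q_eval s; rewrite /root -Q_coef Qb coefC.
have [c c_neq0 Q0] : exists2 c, c != 0 & Q`_0 = c%:P.
  apply/size_poly1P; apply: contraT => /closed_rootP [s].
  by have [b b_neq0 Qb] := Q_eval s; rewrite /root -Q_coef Qb coefC /= (negbTE b_neq0).
by exists c => //; rewrite -[r 'X](subrK 'X) -/Q Q_const Q0 addrC.
Qed.

Lemma aut_fixed_point_free_absurd : False.
Proof.
have [b b_neq0 ry] := aut_translates_y.
have r_comp : forall f, r f = f \Po ('X + polyK b).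
  apply: eq_morph_generators => [u v|u v|u v|u v|k||]; rewrite ?rD ?rM //.
  - by rewrite comp_polyD.
  - by rewrite comp_polyM.
  - by rewrite rK comp_polyC.
  - by rewrite aut_fixes_x comp_polyC.
  - by rewrite ry comp_polyX.
have polyK_char0 : [pchar {poly K}] =i pred0 by move=> n; rewrite pchar_poly.
have b_neq0' : b%:P != 0 by rewrite polyC_eq0.
apply: (@not_D_into_Kx (D polyx)`_0 (D 'X)`_0).
  apply: (comp_polyXaddC_invariant polyK_char0 b_neq0').
  by rewrite -r_comp rDC aut_fixes_x.
apply: (comp_polyXaddC_invariant polyK_char0 b_neq0').
by rewrite -r_comp rDC ry DD DK0 addr0.
Qed.

End FixedPointFree.

Lemma aut_eq_id : (exists g, r polyx = g * polyx) -> r =1 id.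
Proof.
move=> r_stable_x.
have [[s [t fix_st]] | no_fix] := classic (exists s t, fixes_point s t).
  exact: aut_eq_id_of_fixed_point fix_st.
by case: aut_fixed_point_free_absurd => // s t fix_st; apply: no_fix; exists s, t.
Qed.

End SimpleDerivation.

Section MpolyAsIteratedPoly.
Variable K : fieldType.
Local Notation S := {poly {poly K}}.
Local Notation MP := {mpoly K[2]}.

Definition poly2_var (i : 'I_2) : S := if i == ord0 then polyx K else 'X.

Definition poly2_of_mpoly : {rmorphism MP -> S} := mmap (@polyK K) poly2_var.

Lemma poly2_of_mpolyE p : poly2_of_mpoly p = mmap (@polyK K) poly2_var p.
Proof. by []. Qed.

Definition mpoly_of_poly2 : {rmorphism S -> MP} :=
  horner_eval 'X_ord_max \o map_poly (horner_eval 'X_ord0 \o map_poly (@mpolyC 2 K)).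

Lemma poly2_of_mpolyC c : poly2_of_mpoly c%:MP = polyK c.
Proof. by rewrite /= mmapC. Qed.

Lemma poly2_of_mpolyX i : poly2_of_mpoly 'X_i = poly2_var i.
Proof. by rewrite /= mmapX mmap1U. Qed.

Lemma mpoly_of_poly2_polyK c : mpoly_of_poly2 (polyK c) = c%:MP.
Proof.
by rewrite /= map_polyC horner_evalE hornerC /= map_polyC horner_evalE hornerC.
Qed.

Lemma mpoly_of_poly2x : mpoly_of_poly2 (polyx K) = 'X_ord0.
Proof. by rewrite /= map_polyC /= !horner_evalE hornerC map_polyX hornerX. Qed.

Lemma mpoly_of_poly2y : mpoly_of_poly2 'X = 'X_ord_max.
Proof. by rewrite /= map_polyX horner_evalE hornerX. Qed.

Lemma mpoly_of_poly2_var i : mpoly_of_poly2 (poly2_var i) = 'X_i.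
Proof.
rewrite /poly2_var; case: ifPn => [/eqP -> | i_neq0]; first exact: mpoly_of_poly2x.
rewrite mpoly_of_poly2y; congr 'X_ _; apply/val_inj.
by case: i i_neq0 => [[|[|//]] ?].
Qed.

Lemma mpoly_of_poly2K : cancel mpoly_of_poly2 poly2_of_mpoly.
Proof.
apply: eq_morph_generators => [a b|a b|//|//|k||]; rewrite ?rmorphD ?rmorphM //.
- by rewrite mpoly_of_poly2_polyK poly2_of_mpolyC.
- by rewrite mpoly_of_poly2x poly2_of_mpolyX.
- by rewrite mpoly_of_poly2y poly2_of_mpolyX.
Qed.

Lemma poly2_of_mpolyK : cancel poly2_of_mpoly mpoly_of_poly2.
Proof.
elim/mpolyind => [|c m p _ _ IHp]; first by rewrite !rmorph0.
rewrite !rmorphD IHp -mul_mpolyC !rmorphM poly2_of_mpolyC mpoly_of_poly2_polyK.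
congr (_ * _ + _); rewrite poly2_of_mpolyE mmapX /mmap1 rmorph_prod mpolyXE_id.
by apply: eq_bigr => i _; rewrite rmorphXn mpoly_of_poly2_var.
Qed.

Definition conj_poly2 (F : MP -> MP) (f : S) : S :=
  poly2_of_mpoly (F (mpoly_of_poly2 f)).

Lemma conj_poly2_morphD F : {morph F : a b / a + b} -> {morph conj_poly2 F : a b / a + b}.
Proof. by move=> FD a b; rewrite /conj_poly2 rmorphD FD rmorphD. Qed.

Lemma conj_poly2_morphM F : {morph F : a b / a * b} -> {morph conj_poly2 F : a b / a * b}.
Proof. by move=> FM a b; rewrite /conj_poly2 rmorphM FM rmorphM. Qed.

Lemma conj_poly2_polyK F : (forall k p, F (k *: p) = k *: F p) ->
  forall k f, conj_poly2 F (polyK k * f) = polyK k * conj_poly2 F f.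
Proof.
move=> FZ k f; rewrite /conj_poly2 rmorphM mpoly_of_poly2_polyK mul_mpolyC FZ.
by rewrite -mul_mpolyC rmorphM poly2_of_mpolyC.
Qed.

Lemma conj_poly2_leibniz F : (forall f g, F (f * g) = g * F f + f * F g) ->
  forall f g, conj_poly2 F (f * g) = g * conj_poly2 F f + f * conj_poly2 F g.
Proof.
by move=> FL f g; rewrite /conj_poly2 rmorphM FL rmorphD !rmorphM !mpoly_of_poly2K.
Qed.

Lemma conj_poly2_stable_x F : (forall f, ideal_x f -> ideal_x (F f)) ->
  exists g, conj_poly2 F (polyx K) = g * polyx K.
Proof.
move=> F_x; have [|g Fx] := F_x 'X_ord0; first by exists 1; rewrite mul1r.
by exists (poly2_of_mpoly g); rewrite /conj_poly2 mpoly_of_poly2x Fx rmorphM poly2_of_mpolyX.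
Qed.

Lemma conj_poly2_comp F G f : conj_poly2 F (conj_poly2 G f) = conj_poly2 (F \o G) f.
Proof. by rewrite /conj_poly2 poly2_of_mpolyK. Qed.

Lemma conj_poly2_bij F : bijective F -> bijective (conj_poly2 F).
Proof.
case=> G FK GK; exists (conj_poly2 G) => f.
  by rewrite conj_poly2_comp /conj_poly2 /= FK mpoly_of_poly2K.
by rewrite conj_poly2_comp /conj_poly2 /= GK mpoly_of_poly2K.
Qed.

Lemma conj_poly2_simple (D : MP -> MP) :
    (forall I, is_ideal I -> (forall f, I f -> I (D f)) ->
      (forall f, I f -> f = 0) \/ (forall f, I f)) ->
  forall I : S -> Prop, ideal_pred I -> (forall f, I f -> I (conj_poly2 D f)) ->
    (forall f, I f -> f = 0) \/ (forall f, I f).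
Proof.
move=> D_simple I [I0 ID IM] I_stable.
have J_ideal : is_ideal (fun p => I (poly2_of_mpoly p)).
  by split; [rewrite rmorph0 | split=> a b *; rewrite ?rmorphD ?rmorphM; auto].
have J_stable p : I (poly2_of_mpoly p) -> I (poly2_of_mpoly (D p)).
  by move/I_stable; rewrite /conj_poly2 poly2_of_mpolyK.
case: (D_simple _ J_ideal J_stable) => [J0 | J1]; [left | right] => f.
  move=> If; rewrite -(mpoly_of_poly2K f) (J0 (mpoly_of_poly2 f)) ?rmorph0 //.
  by rewrite mpoly_of_poly2K.
by rewrite -(mpoly_of_poly2K f); apply: J1.
Qed.

End MpolyAsIteratedPoly.

Arguments poly2_of_mpoly {K}.
Arguments mpoly_of_poly2 {K}.

Lemma linear_morphD_scalable (R : pzRingType) (V : lmodType R) (L : V -> V) :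
    (forall a p q, L (a *: p + q) = a *: L p + L q) ->
  {morph L : p q / p + q} /\ (forall a p, L (a *: p) = a *: L p).
Proof.
move=> L_lin; have LD : {morph L : p q / p + q}.
  by move=> p q; have := L_lin 1 p q; rewrite !scale1r.
split=> // a p; have L0 : L 0 = 0 by apply: (@addrI _ (L 0)); rewrite -LD !addr0.
by rewrite -[a *: p]addr0 L_lin L0 addr0.
Qed.

Theorem lemma2p4 (K : closedFieldType) (hchar : [pchar K] =i pred0)
  (D rho : {mpoly K[2]} -> {mpoly K[2]}) :
  simple_derivation D -> in_AutD D rho ->
  (forall f, ideal_x f -> ideal_x (rho f)) ->
  forall f, rho f = f.
Proof.
move=> [[D_lin D_leibniz] D_simple] [[rho_bij [rho_lin [rhoM rho1]]] rhoDC] rho_x f.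
have [DD DZ] := linear_morphD_scalable D_lin.
have [rhoD rhoZ] := linear_morphD_scalable rho_lin.
suff /(_ (poly2_of_mpoly f)) : conj_poly2 rho =1 id.
  by rewrite /conj_poly2 poly2_of_mpolyK => /(can_inj (@poly2_of_mpolyK _)).
apply: (aut_eq_id (D := conj_poly2 D)) => //.
- exact: conj_poly2_morphD.
- exact: conj_poly2_polyK.
- exact: conj_poly2_leibniz.
- exact: conj_poly2_simple.
- exact: conj_poly2_bij.
- exact: conj_poly2_morphD.
- exact: conj_poly2_morphM.
- move=> k; rewrite -[polyK k]mulr1 conj_poly2_polyK //.
  by rewrite /conj_poly2 rmorph1 rho1 rmorph1.
- by move=> a; rewrite !conj_poly2_comp /conj_poly2 /= rhoDC.
- exact: conj_poly2_stable_x.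
Qed.
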